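(* Let $\Bbbk$ be a field of characteristic $p>3$. Then there exists a finite-dimensional $\Bbbk$-vector space $A$ with a symmetric trilinear operation $(\cdot,\cdot,\cdot):A^3\to A$ such that $A$ is Engel (for every $x\in A$ the linear map $y\mapsto (x,x,y)$ is nilpotent) but $A$ is not weakly nilpotent.
   Context: For an algebra $A$ (a vector space with multilinear operations), a monomial is a formal expression built from variables by applying the operations; its degree is the number of occurrences of variables. An element $a\in A$ is nilpotent of index $\le n$ if $M(a,a,\dots,a)=0$ for every monomial $M$ of degree $\ge n$; $A$ is weakly nilpotent if every element of $A$ is nilpotent (of some index). *)

From HB Require Import structures.
From mathcomp Require Import all_boot all_order all_algebra.
Set Implicit Arguments. Unset Strict Implicit. Unset Printing Implicit Defensive.
Import GRing.Theory.
Local Open Scope ring_scope.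

Inductive tmonomial : Type :=
| TVar : tmonomial
| TOp : tmonomial -> tmonomial -> tmonomial -> tmonomial.

Fixpoint tdeg (m : tmonomial) : nat :=
  match m with
  | TVar => 1
  | TOp m1 m2 m3 => (tdeg m1 + tdeg m2 + tdeg m3)%N
  end.

Fixpoint teval (T : Type) (op : T -> T -> T -> T) (a : T) (m : tmonomial) : T :=
  match m with
  | TVar => a
  | TOp m1 m2 m3 => op (teval op a m1) (teval op a m2) (teval op a m3)
  end.

Section Ternary.
Variables (K : fieldType) (A : lmodType K) (op : A -> A -> A -> A).

Definition trilinear : Prop :=
  (forall (c : K) x x' y z, op (c *: x + x') y z = c *: op x y z + op x' y z) /\
  (forall (c : K) x y y' z, op x (c *: y + y') z = c *: op x y z + op x y' z) /\
  (forall (c : K) x y z z', op x y (c *: z + z') = c *: op x y z + op x y z').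

Definition symmetric3 : Prop :=
  (forall x y z, op x y z = op y x z) /\ (forall x y z, op x y z = op x z y).

Definition nilpotent_of_index (a : A) (n : nat) : Prop :=
  forall m : tmonomial, (n <= tdeg m)%N -> teval op a m = 0.

Definition nilpotent_elt (a : A) : Prop := exists n, nilpotent_of_index a n.

Definition weakly_nilpotent : Prop := forall a : A, nilpotent_elt a.

Definition engel : Prop :=
  forall x : A, exists k : nat, forall y : A, iter k (op x x) y = 0.
End Ternary.

From HB Require Import structures.
From mathcomp Require Import all_boot all_order all_algebra.
From mathcomp Require Import ring zify.
Set Implicit Arguments. Unset Strict Implicit. Unset Printing Implicit Defensive.
Import GRing.Theory.
Local Open Scope ring_scope.

(* Take A = V + K a + K b, with V the polynomials of degree < p, a = X^p and
   b = X^(p+1), and let (.,.,.) be the symmetric trilinear extension of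
     (a,a,a) = b,  (a,b,b) = 1,  (a,a,v) = v',  (b,b,v) = X v truncated at degree p,
   all other products of these basis vectors being 0.  Then 1 = (a,b,(a,a,a)) and
   (a,a,(b,b,1)) = (X)' = 1, so monomials of unbounded degree in a evaluate to 1.
   For x = v0 + s a + t b, two applications of y |-> (x,x,y) land in V, on which
   the map is s^2 D + t^2 X.  Multiplication by X is nilpotent on V, and if s <> 0
   then D + c X is conjugate to D, which is nilpotent on V, by multiplication with
   the truncated exponential exp(c X^2 / 2): D commutes with truncation at degree
   p since p = 0 in K, and the exponential exists since p is odd. *)

Lemma iter_scale (R : nzRingType) (V : lmodType R) (g : V -> V) (c : R) k v :
  (forall a w, g (a *: w) = a *: g w) ->
  iter k (fun w => c *: g w) v = c ^+ k *: iter k g v.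
Proof.
move=> gZ; elim: k => [|k IHk] /=; first by rewrite scale1r.
by rewrite IHk gZ scalerA exprS.
Qed.

Lemma size_deriv_leq (R : nzRingType) (f : {poly R}) : (size f^`() <= size f)%N.
Proof.
have [->|f0] := eqVneq f 0; first by rewrite deriv0.
exact/ltnW/lt_size_deriv.
Qed.

Lemma size_polyD_leq (R : nzRingType) (f g : {poly R}) n :
  (size f <= n)%N -> (size g <= n)%N -> (size (f + g)%R <= n)%N.
Proof. by move=> sf sg; apply: leq_trans (size_polyD _ _) _; rewrite geq_max sf sg. Qed.

Section Truncation.
Variables (K : comNzRingType) (n : nat).
Implicit Types f g : {poly K}.

Lemma take_poly_mull f g : take_poly n (take_poly n f * g) = take_poly n (f * g).
Proof.
rewrite -{2}(poly_take_drop n f) mulrDl take_polyD.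
by rewrite mulrAC take_polyMXn_0 addr0.
Qed.

Lemma take_poly_mulr f g : take_poly n (f * take_poly n g) = take_poly n (f * g).
Proof. by rewrite mulrC take_poly_mull mulrC. Qed.

Lemma deriv_take_poly f : n%:R = 0 :> K -> (take_poly n f)^`() = take_poly n f^`().
Proof.
move=> n0; apply/polyP => i; rewrite coef_deriv !coef_take_poly coef_deriv.
case: ltngtP => [//|_|eq_i1n]; first by rewrite mul0rn.
by rewrite mul0rn -mulr_natr eq_i1n n0 mulr0.
Qed.

Definition shiftX f := take_poly n ('X * f).

Lemma shiftXZ (c : K) f : shiftX (c *: f) = c *: shiftX f.
Proof. by rewrite /shiftX -scalerAr take_polyZ. Qed.

Lemma shiftX0 : shiftX 0 = 0.
Proof. by rewrite /shiftX mulr0 take_poly0r. Qed.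

Lemma shiftXD f g : shiftX (f + g) = shiftX f + shiftX g.
Proof. by rewrite /shiftX mulrDr take_polyD. Qed.

Lemma size_shiftX f : (size (shiftX f) <= n)%N.
Proof. exact: size_take_poly. Qed.

Lemma iter_shiftX k f :
  (size f <= n)%N -> iter k shiftX f = take_poly n ('X^k * f).
Proof.
move=> sf; elim: k => [|k IHk] /=; first by rewrite mul1r take_poly_id.
by rewrite IHk /shiftX take_poly_mulr mulrA -exprS.
Qed.

Lemma shiftX_nilpotent f : (size f <= n)%N -> iter n shiftX f = 0.
Proof. by move=> sf; rewrite iter_shiftX // mulrC take_polyMXn_0. Qed.

End Truncation.

Section ExpConjugation.
Variables (K : fieldType) (p : nat).
Hypotheses (pchar_p : p \in [pchar K]) (p_gt2 : (2 < p)%N).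
Implicit Types f g : {poly K}.

Definition deriv_shift (s u : K) f := s *: f^`() + u *: shiftX p f.

Lemma deriv_shiftZ s u (c : K) f : deriv_shift s u (c *: f) = c *: deriv_shift s u f.
Proof.
by rewrite /deriv_shift derivZ shiftXZ !scalerA scalerDr !scalerA (mulrC s) (mulrC u).
Qed.

Lemma deriv_shift_scale s u f : s != 0 -> deriv_shift s u f = s *: deriv_shift 1 (u / s) f.
Proof. by move=> s0; rewrite /deriv_shift scale1r scalerDr scalerA mulrCA divff ?mulr1. Qed.

Lemma size_deriv_shift s u f : (size f <= p)%N -> (size (deriv_shift s u f) <= p)%N.
Proof.
move=> sf; rewrite size_polyD_leq ?(leq_trans (size_scale_leq _ _)) ?size_shiftX //.
exact: leq_trans (size_deriv_leq f) sf.
Qed.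

Lemma size_iter_deriv_shift s u k f :
  (size f <= p)%N -> (size (iter k (deriv_shift s u) f) <= p)%N.
Proof. by move=> sf; elim: k => //= k; apply: size_deriv_shift. Qed.

Lemma natr_neq0_lt k : (0 < k < p)%N -> k%:R != 0 :> K.
Proof.
case/andP=> k_gt0 k_lt_p; rewrite -(dvdn_pcharf pchar_p).
by apply: contraTN k_lt_p => /(dvdn_leq k_gt0); rewrite leqNgt.
Qed.

Lemma fact_neq0 k : (k < p)%N -> k`!%:R != 0 :> K.
Proof.
elim: k => [|k IHk] lt_kp; first by rewrite fact0 oner_neq0.
by rewrite factS natrM mulf_neq0 //; [exact: natr_neq0_lt | exact/IHk/ltnW].
Qed.

Lemma odd_p : odd p.
Proof.
have [p2|] := even_prime (pcharf_prime pchar_p); last by [].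
by move: p_gt2; rewrite p2.
Qed.

Section Exponential.
Variable c : K.

(* Coefficients of the power series exp(c X^2 / 2). *)
Definition expc i : K := if odd i then 0 else (c / 2%:R) ^+ i./2 / (i./2)`!%:R.
Definition expX2 : {poly K} := \poly_(i < p) expc i.

Lemma expX2_coef0 : expX2`_0 = 1.
Proof. by rewrite coef_poly (ltn_trans _ p_gt2) // /expc /= expr0 fact0 divr1. Qed.

Lemma expc_rec j : (j.+2 < p)%N -> expc j.+2 *+ j.+2 = c * expc j.
Proof.
move=> lt_j2p; rewrite /expc /= negbK.
case: ifP => [_|even_j]; first by rewrite mul0rn mulr0.
have [m def_j] : exists m, j = m.*2.
  by exists j./2; rewrite -[LHS]odd_double_half even_j.
rewrite {}def_j {j even_j} in lt_j2p *.
have lt_m1p : (m.+1 < p)%N by move: lt_j2p; rewrite -mul2n; lia.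
rewrite doubleK -[_ *+ _]mulr_natr factS natrM exprS.
have -> : m.*2.+2%:R = 2%:R * m.+1%:R :> K by rewrite -natrM mul2n doubleS.
field.
by rewrite fact_neq0 ?(ltnW lt_m1p) // addrC natr1 !natr_neq0_lt.
Qed.

Lemma expX2_deriv : take_poly p expX2^`() = take_poly p (c *: ('X * expX2)).
Proof.
apply/polyP => i; rewrite !coef_take_poly; case: ifP => // lt_ip.
rewrite coef_deriv coefZ coefXM !coef_poly.
case: i lt_ip => [|j] lt_j1p; first by rewrite /expc /= if_same mulr0.
rewrite /= (ltnW lt_j1p); case: ltnP => [|ge_j2p]; first exact: expc_rec.
have : odd j.+2 by rewrite (_ : j.+2 = p) ?odd_p //; apply/eqP; rewrite eqn_leq lt_j1p.
by rewrite /= negbK /expc => ->; rewrite mulr0 mul0rn.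
Qed.

Definition mul_expX2 f := take_poly p (expX2 * f).

Lemma deriv_mul_expX2 f : (mul_expX2 f)^`() = mul_expX2 (deriv_shift 1 c f).
Proof.
rewrite /mul_expX2 deriv_take_poly ?(pcharf0 pchar_p) // derivM take_polyD.
rewrite -take_poly_mull expX2_deriv take_poly_mull.
rewrite /deriv_shift scale1r mulrDr take_polyD addrC.
by rewrite -scalerAl -scalerAr !take_polyZ /shiftX take_poly_mulr mulrCA mulrA.
Qed.

Lemma derivn_mul_expX2 k f : (mul_expX2 f)^`(k) = mul_expX2 (iter k (deriv_shift 1 c) f).
Proof. by elim: k => [|k IHk] //; rewrite derivnS IHk deriv_mul_expX2. Qed.

Lemma mul_expX2_inj f : (size f <= p)%N -> mul_expX2 f = 0 -> f = 0.
Proof.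
move=> sf f0; apply/polyP => i; rewrite coef0; elim/ltn_ind: i => i IHi.
have [lt_ip|ge_ip] := ltnP i p; last by rewrite nth_default // (leq_trans sf).
move/(congr1 (fun g => g`_i)): f0.
rewrite coef_take_poly lt_ip coef0 coefMr big_ord_recr /= subnn expX2_coef0 mul1r.
by rewrite big1 ?add0r // => j _; rewrite IHi ?mulr0.
Qed.

End Exponential.

Lemma deriv_shift_nilpotent s u f : (size f <= p)%N -> iter p (deriv_shift s u) f = 0.
Proof.
move=> sf; have [-> | s0] := eqVneq s 0.
  rewrite (eq_iter (f' := fun g => u *: shiftX p g)); last first.
    by move=> g; rewrite /deriv_shift scale0r add0r.
  by rewrite iter_scale ?shiftX_nilpotent ?scaler0 //; apply: shiftXZ.
rewrite (eq_iter (f' := fun g => s *: deriv_shift 1 (u / s) g)); last first.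
  by move=> g; apply: deriv_shift_scale.
rewrite iter_scale; last by move=> *; apply: deriv_shiftZ.
suff -> : iter p (deriv_shift 1 (u / s)) f = 0 by rewrite scaler0.
apply: (@mul_expX2_inj (u / s)); first exact: size_iter_deriv_shift.
by rewrite -derivn_mul_expX2 derivn_poly0 // size_take_poly.
Qed.

End ExpConjugation.

Definition cube := TOp TVar TVar TVar.

Fixpoint long_monomial n :=
  match n with
  | 0 => TOp TVar cube cube
  | n.+1 => TOp TVar TVar (TOp cube cube (long_monomial n))
  end.

Lemma tdeg_long_monomial n : (n <= tdeg (long_monomial n))%N.
Proof. by elim: n => //= n IHn; lia. Qed.

Section Algebra.
Variables (K : fieldType) (p : nat).
Hypotheses (pchar_p : p \in [pchar K]) (p_gt2 : (2 < p)%N).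
Implicit Types f g h v : {poly K}.

Definition coefa f := f`_p.
Definition coefb f := f`_p.+1.

(* The product of the header, [prod3V] being its component in V. *)
Definition prod3V f g h : {poly K} :=
  (coefa f * coefb g * coefb h + coefb f * coefa g * coefb h
     + coefb f * coefb g * coefa h)%:P
  + (coefa f * coefa g) *: (take_poly p h)^`()
  + (coefa f * coefa h) *: (take_poly p g)^`()
  + (coefa g * coefa h) *: (take_poly p f)^`()
  + (coefb f * coefb g) *: shiftX p (take_poly p h)
  + (coefb f * coefb h) *: shiftX p (take_poly p g)
  + (coefb g * coefb h) *: shiftX p (take_poly p f).

Definition prod3 f g h : {poly K} :=
  (coefa f * coefa g * coefa h) *: 'X^(p.+1) + prod3V f g h.

Lemma coefa_lin (c : K) f f' : coefa (c *: f + f') = c * coefa f + coefa f'.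
Proof. by rewrite /coefa coefD coefZ. Qed.

Lemma coefb_lin (c : K) f f' : coefb (c *: f + f') = c * coefb f + coefb f'.
Proof. by rewrite /coefb coefD coefZ. Qed.

Lemma prod3_linl (c : K) f f' g h :
  prod3 (c *: f + f') g h = c *: prod3 f g h + prod3 f' g h.
Proof.
rewrite /prod3 /prod3V !coefa_lin !coefb_lin take_polyD take_polyZ derivD derivZ.
rewrite shiftXD shiftXZ -!mul_polyC !polyCD !polyCM; ring.
Qed.

Lemma prod3C12 f g h : prod3 f g h = prod3 g f h.
Proof. rewrite /prod3 /prod3V -!mul_polyC !polyCD !polyCM; ring. Qed.

Lemma prod3C23 f g h : prod3 f g h = prod3 f h g.
Proof. rewrite /prod3 /prod3V -!mul_polyC !polyCD !polyCM; ring. Qed.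

Lemma prod3_linm (c : K) f g g' h :
  prod3 f (c *: g + g') h = c *: prod3 f g h + prod3 f g' h.
Proof. by rewrite prod3C12 prod3_linl !(prod3C12 _ f). Qed.

Lemma prod3_linr (c : K) f g h h' :
  prod3 f g (c *: h + h') = c *: prod3 f g h + prod3 f g h'.
Proof. by rewrite prod3C23 prod3_linm !(prod3C23 f _ g). Qed.

Lemma size_prod3V f g h : (size (prod3V f g h) <= p)%N.
Proof.
have sD (q : {poly K}) : (size (take_poly p q)^`() <= p)%N.
  by apply: leq_trans (size_deriv_leq _) _; apply: size_take_poly.
have sC (k : K) : (size k%:P <= p)%N.
  exact: leq_trans (size_polyC_leq1 k) (ltnW (ltnW p_gt2)).
by rewrite /prod3V !size_polyD_leq // (leq_trans (size_scale_leq _ _)) ?size_shiftX.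
Qed.

Lemma coefa_small v : (size v <= p)%N -> coefa v = 0.
Proof. by move=> sv; rewrite /coefa nth_default. Qed.

Lemma coefb_small v : (size v <= p)%N -> coefb v = 0.
Proof. by move=> sv; rewrite /coefb nth_default // leqW. Qed.

Lemma size_prod3 f g h : (size (prod3 f g h) <= p.+2)%N.
Proof.
rewrite size_polyD_leq ?(leq_trans (size_scale_leq _ _)) ?size_polyXn //.
by rewrite (leq_trans (size_prod3V _ _ _)) // -addn2 leq_addr.
Qed.

Lemma coefa_prod3 f g h : coefa (prod3 f g h) = 0.
Proof.
rewrite /coefa coefD coefZ coefXn ltn_eqF // mulr0 add0r.
exact: coefa_small (size_prod3V _ _ _).
Qed.

Lemma size_prod3_coefa0 f g h : coefa h = 0 -> (size (prod3 f g h) <= p)%N.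
Proof. by move=> h0; rewrite /prod3 h0 mulr0 scale0r add0r size_prod3V. Qed.

Lemma prod3_xx_deriv_shift x v : (size v <= p)%N ->
  prod3 x x v = deriv_shift p (coefa x * coefa x) (coefb x * coefb x) v.
Proof.
move=> sv; rewrite /prod3 /prod3V (coefa_small sv) (coefb_small sv) (take_poly_id sv).
by rewrite !(mulr0, mul0r, scale0r, addr0, add0r).
Qed.

Lemma prod3_engel x y : iter p.+2 (prod3 x x) y = 0.
Proof.
rewrite !iterSr; set v := prod3 x x (prod3 x x y).
have sv : (size v <= p)%N by rewrite size_prod3_coefa0 ?coefa_prod3.
have iter_deriv_shift k :
    iter k (prod3 x x) v = iter k (deriv_shift p (coefa x * coefa x) (coefb x * coefb x)) v.
  by elim: k => //= k ->; rewrite prod3_xx_deriv_shift // size_iter_deriv_shift.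
by rewrite iter_deriv_shift deriv_shift_nilpotent.
Qed.

Lemma coefa_Xp : coefa 'X^p = 1. Proof. by rewrite /coefa coefXn eqxx. Qed.
Lemma coefb_Xp : coefb 'X^p = 0. Proof. by rewrite /coefb coefXn gtn_eqF. Qed.
Lemma coefa_XpS : coefa 'X^(p.+1) = 0. Proof. by rewrite /coefa coefXn ltn_eqF. Qed.
Lemma coefb_XpS : coefb 'X^(p.+1) = 1. Proof. by rewrite /coefb coefXn eqxx. Qed.

Lemma take_poly_Xn_eq0 n : (p <= n)%N -> take_poly p ('X^n : {poly K}) = 0.
Proof. by move=> le_pn; rewrite -(subnK le_pn) exprD take_polyMXn_0. Qed.

Local Ltac basis_prod :=
  rewrite /prod3 /prod3V ?coefa_Xp ?coefb_Xp ?coefa_XpS ?coefb_XpS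
    ?take_poly_Xn_eq0 ?(mulr0, mul0r, mulr1, mul1r, scale0r, scaler0, scale1r,
                         addr0, add0r, polyC0, deriv0, shiftX0) //.

Lemma prod3_aaa : prod3 'X^p 'X^p 'X^p = 'X^(p.+1).
Proof. by basis_prod. Qed.

Lemma prod3_abb : prod3 'X^p 'X^(p.+1) 'X^(p.+1) = 1.
Proof. by basis_prod. Qed.

Lemma prod3_aav v : (size v <= p)%N -> prod3 'X^p 'X^p v = v^`().
Proof.
move=> sv; rewrite /prod3 /prod3V (coefa_small sv) (coefb_small sv) (take_poly_id sv).
by basis_prod.
Qed.

Lemma prod3_bbv v : (size v <= p)%N -> prod3 'X^(p.+1) 'X^(p.+1) v = shiftX p v.
Proof.
move=> sv; rewrite /prod3 /prod3V (coefa_small sv) (coefb_small sv) (take_poly_id sv).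
by basis_prod.
Qed.

Lemma teval_long_monomial n : teval prod3 'X^p (long_monomial n) = 1.
Proof.
have le2p : (2 <= p)%N by rewrite ltnW.
elim: n => [|n IHn] /=; rewrite prod3_aaa; first exact: prod3_abb.
rewrite IHn prod3_bbv ?size_poly1 ?(ltnW le2p) // /shiftX mulr1.
by rewrite take_poly_id ?size_polyX // prod3_aav ?size_polyX // derivX.
Qed.

Definition rprod3 (x y z : 'rV[K]_p.+2) : 'rV[K]_p.+2 :=
  poly_rV (prod3 (rVpoly x) (rVpoly y) (rVpoly z)).

Lemma rVpoly_rprod3 x y z :
  rVpoly (rprod3 x y z) = prod3 (rVpoly x) (rVpoly y) (rVpoly z).
Proof. exact/poly_rV_K/size_prod3. Qed.

Lemma rprod3_trilinear : trilinear rprod3.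
Proof.
split; [|split] => c x x' y z; rewrite /rprod3 [rVpoly (c *: _ + _)]linearP /=.
- by rewrite prod3_linl linearP.
- by rewrite prod3_linm linearP.
- by rewrite prod3_linr linearP.
Qed.

Lemma rprod3_symmetric : symmetric3 rprod3.
Proof. by split=> x y z; rewrite /rprod3; [rewrite prod3C12 | rewrite prod3C23]. Qed.

Lemma rprod3_engel : engel rprod3.
Proof.
move=> x; exists p.+2 => y; rewrite -[LHS]rVpolyK.
have -> k :
    rVpoly (iter k (rprod3 x x) y) = iter k (prod3 (rVpoly x) (rVpoly x)) (rVpoly y).
  by elim: k => //= k IHk; rewrite rVpoly_rprod3 IHk.
by rewrite prod3_engel linear0.
Qed.

Lemma rprod3_not_weakly_nilpotent : ~ weakly_nilpotent rprod3.
Proof.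
pose a : 'rV[K]_p.+2 := poly_rV 'X^p.
have rVpoly_a : rVpoly a = 'X^p by rewrite poly_rV_K // size_polyXn.
have rVpoly_teval m : rVpoly (teval rprod3 a m) = teval prod3 'X^p m.
  elim: m => [|m1 IH1 m2 IH2 m3 IH3] /=; first exact: rVpoly_a.
  by rewrite rVpoly_rprod3 IH1 IH2 IH3.
move=> /(_ a) [n nil_a]; have := nil_a _ (tdeg_long_monomial n).
move/(congr1 rVpoly); rewrite rVpoly_teval teval_long_monomial linear0.
exact/eqP/oner_neq0.
Qed.

End Algebra.

Theorem mainTheorem3 (K : fieldType) (p : nat)
  (hp : p \in [pchar K]) (hp3 : (3 < p)%N) :
  exists (A : vectType K) (op : A -> A -> A -> A),
    trilinear op /\ symmetric3 op /\ engel op /\ ~ weakly_nilpotent op.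
Proof.
have p_gt2 : (2 < p)%N by apply: ltnW.
exists 'rV[K]_p.+2, (@rprod3 K p).
split; first exact: rprod3_trilinear.
split; first exact: rprod3_symmetric.
split; first exact: rprod3_engel.
exact: rprod3_not_weakly_nilpotent.
Qed.
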